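(* Let $d\geq2$, let $\omega\in\mathbb{R}^d$ be non-resonant (i.e. $\langle\omega,k\rangle\neq0$ for all $k\in\mathbb{Z}^d\setminus\{0\}$), and let $(k_n)$ be a sequence in $\mathbb{Z}^d$ with $|k_n|\to\infty$ and $|\langle\omega,k_n\rangle|<C/|k_n|^{d-1}$ for a constant $C$ independent of $n$. Then (for $n$ large enough) there exists an integer vector $k_n'\in\mathbb{Z}^d$ such that $$\langle k_n,k_n'\rangle=0,\qquad |k_n'|\sim|k_n|,\qquad |\langle k_n',\omega\rangle|\sim|k_n|.$$
   Context: $|\cdot|$ is the Euclidean norm. The notation $f\sim g$ means $\frac1{C'}g<f<C'g$ for some constant $C'>1$ independent of $n$. *)

From mathcomp Require Import all_boot all_order all_algebra.
From mathcomp Require Import reals.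
Set Implicit Arguments. Unset Strict Implicit. Unset Printing Implicit Defensive.
Import Order.TTheory GRing.Theory Num.Theory.
Local Open Scope ring_scope.

Definition dotZ (d : nat) (k k' : 'I_d -> int) : int := \sum_(i < d) k i * k' i.

Definition dotRZ (R : realType) (d : nat) (w : 'I_d -> R) (k : 'I_d -> int) : R :=
  \sum_(i < d) w i * (k i)%:~R.

Definition normZ (R : realType) (d : nat) (k : 'I_d -> int) : R :=
  Num.sqrt (\sum_(i < d) ((k i)%:~R : R) ^+ 2).

Definition nonresonant (R : realType) (d : nat) (w : 'I_d -> R) : Prop :=
  forall k : 'I_d -> int, (exists i, k i != 0) -> dotRZ w k != 0.

From mathcomp Require Import all_boot all_order all_algebra.
From mathcomp Require Import reals ring lra.
Set Implicit Arguments. Unset Strict Implicit. Unset Printing Implicit Defensive.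
Import Order.TTheory GRing.Theory Num.Theory.
Local Open Scope ring_scope.

(* Let i be a coordinate of k_n of maximal size, so that |k_n| ~ |k_{n,i}|.
   The vectors k' = k_{n,j} e_i - k_{n,i} e_j are orthogonal to k_n and
   satisfy |k'| ~ |k_n| and |<w, k'>| <= |w|_1 |k_n|; it remains to find j
   with |<w, k'>| = |w_i k_{n,j} - w_j k_{n,i}| >~ |k_n|.  These cross terms
   satisfy sum_j k_{n,j} (w_i k_{n,j} - w_j k_{n,i}) = w_i |k_n|^2 - k_{n,i} <w, k_n>,
   and since |<w, k_n>| < C / |k_n|^(d-1) <= C / |k_n| the right-hand side is
   of size |k_n|^2, so they cannot all be o(|k_n|).  Non-resonance is only used
   to get w_i <> 0, uniformly in i. *)

Section PlanePerp.
Variable d : nat.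
Implicit Types (i j : 'I_d) (k : 'I_d -> int).

Definition plane_perp i j k : 'I_d -> int :=
  fun l => if l == i then k j else if l == j then - k i else 0.

Lemma sum_plane_perp (V : nmodType) (F : 'I_d -> int -> V) i j k :
  i != j -> (forall l, F l 0 = 0) ->
  \sum_l F l (plane_perp i j k l) = F i (k j) + F j (- k i).
Proof.
move=> ij F0; rewrite (bigD1 i) //= /plane_perp eqxx (bigD1 j) /=; last by rewrite eq_sym.
rewrite eq_sym (negbTE ij) eqxx big1 ?addr0 // => l /andP[li lj].
by rewrite (negbTE li) (negbTE lj) F0.
Qed.

Lemma dotZ_plane_perp i j k : i != j -> dotZ k (plane_perp i j k) = 0.
Proof.
move=> ij; rewrite /dotZ (sum_plane_perp (F := fun l m => k l * m)) => [|//|l].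
  by rewrite mulrN mulrC subrr.
by rewrite mulr0.
Qed.

Lemma dotRZ_plane_perp (R : realType) (w : 'I_d -> R) i j k : i != j ->
  dotRZ w (plane_perp i j k) = w i * (k j)%:~R - w j * (k i)%:~R.
Proof.
move=> ij; rewrite /dotRZ (sum_plane_perp (F := fun l m => w l * m%:~R)) => [|//|l].
  by rewrite intrN mulrN.
by rewrite mulr0.
Qed.

Lemma normZ_plane_perp (R : realType) i j k : i != j ->
  normZ R (plane_perp i j k) = Num.sqrt ((k j)%:~R ^+ 2 + (k i)%:~R ^+ 2).
Proof.
move=> ij; rewrite /normZ (sum_plane_perp (F := fun l m => (m%:~R : R) ^+ 2)) => [|//|l].
  by rewrite intrN sqrrN.
by rewrite expr2 mulr0.
Qed.

End PlanePerp.

Section Estimates.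
Variables (R : realType) (d : nat).
Implicit Types (w : 'I_d -> R) (k : 'I_d -> int) (i j : 'I_d).

Lemma normZ_ge0 k : 0 <= normZ R k.
Proof. exact: sqrtr_ge0. Qed.

Lemma sqr_normZ k : normZ R k ^+ 2 = \sum_l (k l)%:~R ^+ 2.
Proof. by rewrite sqr_sqrtr // sumr_ge0 // => l _; rewrite sqr_ge0. Qed.

Lemma sqr_coord_le_sqr_normZ k l : (k l)%:~R ^+ 2 <= normZ R k ^+ 2.
Proof.
rewrite sqr_normZ (bigD1 l) //= lerDl.
by apply: sumr_ge0 => m _; rewrite sqr_ge0.
Qed.

Lemma coord_le_normZ k l : `|(k l)%:~R| <= normZ R k.
Proof.
rewrite -(ler_pXn2r (_ : 0 < 2)%N) ?nnegrE ?normZ_ge0 //.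
by rewrite real_normK ?num_real // sqr_coord_le_sqr_normZ.
Qed.

Lemma sqr_normZ_plane_perp_le k i j : i != j ->
  normZ R (plane_perp i j k) ^+ 2 <= 2 * normZ R k ^+ 2.
Proof.
move=> ij; rewrite normZ_plane_perp // sqr_sqrtr ?addr_ge0 ?sqr_ge0 //.
by rewrite mulr2n mulrDl mul1r lerD ?sqr_coord_le_sqr_normZ.
Qed.

Lemma sqr_normZ_le_max_coord k i : (forall l, `|k l| <= `|k i|) ->
  normZ R k ^+ 2 <= d%:R * (k i)%:~R ^+ 2.
Proof.
move=> kmax; rewrite sqr_normZ mulr_natl -[X in _ *+ X]card_ord -sumr_const.
apply: ler_sum => l _.
rewrite -(real_normK (num_real ((k l)%:~R : R))) -(real_normK (num_real ((k i)%:~R : R))).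
by apply: lerXn2r; rewrite ?nnegrE // -!intr_norm ler_int.
Qed.

Lemma sqr_normZ_le_plane_perp k i j : i != j -> (forall l, `|k l| <= `|k i|) ->
  normZ R k ^+ 2 <= d%:R * normZ R (plane_perp i j k) ^+ 2.
Proof.
move=> ij kmax; apply: (le_trans (sqr_normZ_le_max_coord kmax)).
rewrite normZ_plane_perp // sqr_sqrtr ?addr_ge0 ?sqr_ge0 // ler_wpM2l ?ler0n //.
by rewrite lerDr sqr_ge0.
Qed.

Lemma dim_gt0_of_normZ_gt0 k : 0 < normZ R k -> (0 < d)%N.
Proof.
rewrite lt0n; apply: contraTneq => d0.
rewrite /normZ big1 ?sqrtr0 ?ltxx // => l _.
by have := ltn_ord l; move: (nat_of_ord l) => m; rewrite d0.
Qed.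

Lemma exists_max_coord k : (0 < d)%N -> exists i, forall l, `|k l| <= `|k i|.
Proof.
move=> d0; case: (@arg_maxnP _ (Ordinal d0) xpredT (fun l => `|k l|%N) isT).
by move=> i _ imax; exists i => l; rewrite -!abszE lez_nat; apply: imax.
Qed.

Lemma nonresonant_coord_neq0 w : nonresonant w -> forall l, w l != 0.
Proof.
move=> hw l; have := hw (fun m => if m == l then 1 else 0).
have -> : dotRZ w (fun m => if m == l then 1 else 0) = w l.
  rewrite /dotRZ (bigD1 l) //= eqxx big1 ?addr0 ?mulr1 // => m ml.
  by rewrite (negbTE ml) mulr0.
by apply; exists l; rewrite eqxx.
Qed.

Lemma exists_abs_lower_bound w :
  (0 < d)%N -> (forall l, w l != 0) -> exists2 u, 0 < u & forall l, u <= `|w l|.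
Proof.
move=> d0 w_neq0; pose V := \sum_l `|w l|^-1.
have le_V l : `|w l|^-1 <= V.
  by rewrite /V (bigD1 l) //= lerDl sumr_ge0 // => m _; rewrite invr_ge0.
have wl_gt0 l : 0 < `|w l| by rewrite normr_gt0.
have V_gt0 : 0 < V by apply: lt_le_trans (le_V (Ordinal d0)); rewrite invr_gt0.
exists V^-1 => [|l]; first by rewrite invr_gt0.
by rewrite -[`|w l|]invrK lef_pV2 ?posrE ?invr_gt0.
Qed.

Lemma cross_term_le w k i j :
  `|w i * (k j)%:~R - w j * (k i)%:~R| <= (\sum_l `|w l|) * normZ R k.
Proof.
case: (eqVneq i j) => [<-|ij]; first by rewrite subrr normr0 mulr_ge0 ?normZ_ge0 ?sumr_ge0.
apply: (le_trans (ler_normB _ _)); rewrite !normrM.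
apply: (@le_trans _ _ ((`|w i| + `|w j|) * normZ R k)).
  by rewrite mulrDl lerD ?ler_wpM2l ?coord_le_normZ.
rewrite ler_wpM2r ?normZ_ge0 // (bigD1 i) //= lerD2l (bigD1 j) 1?eq_sym //=.
by rewrite lerDl sumr_ge0.
Qed.

Lemma cross_terms_bound w k i e :
  (forall l, `|w i * (k l)%:~R - w l * (k i)%:~R| <= e) ->
  `|w i| * normZ R k ^+ 2 <= d%:R * normZ R k * e + `|(k i)%:~R| * `|dotRZ w k|.
Proof.
move=> small; set x := fun l => (k l)%:~R : R.
have ident : w i * normZ R k ^+ 2 - x i * dotRZ w k
    = \sum_l x l * (w i * x l - w l * x i).
  rewrite sqr_normZ /dotRZ !mulr_sumr -sumrB.
  by apply: eq_bigr => l _; rewrite /x; ring.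
have sum_small : `|\sum_l x l * (w i * x l - w l * x i)| <= d%:R * normZ R k * e.
  apply: le_trans (ler_norm_sum _ _ _) _.
  rewrite -mulrA mulr_natl -[X in _ *+ X]card_ord -sumr_const.
  apply: ler_sum => l _; rewrite normrM.
  by apply: ler_pM; [| | exact: coord_le_normZ | exact: small].
rewrite -(ger0_norm (sqr_ge0 (normZ R k))) -normrM -(normrM (x i)).
by rewrite -(subrK (x i * dotRZ w k) (w i * _)) ident (le_trans (ler_normD _ _)) ?lerD.
Qed.

End Estimates.

Lemma mul_lt_of_lt_divXn (R : realType) (x s c : R) n : (0 < n)%N ->
  1 <= s -> 0 <= x -> x < c / s ^+ n -> x * s < c.
Proof.
move=> n0 s1 x0; have sn_gt0 : 0 < s ^+ n by rewrite exprn_gt0 // (lt_le_trans ltr01).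
rewrite ltr_pdivlMr // => lt_c; apply: le_lt_trans lt_c.
by rewrite ler_wpM2l // ler_eXnr.
Qed.

Section Construction.
Variables (R : realType) (d : nat) (w : 'I_d -> R) (u C C' : R).

Lemma exists_large_cross_term k i :
  0 < u -> (forall l, u <= `|w l|) -> 0 < C' -> 2 * d%:R <= u * C' ->
  1 <= normZ R k -> 2 * C <= u * normZ R k -> `|dotRZ w k| * normZ R k < C ->
  exists j, normZ R k / C' < `|w i * (k j)%:~R - w j * (k i)%:~R|.
Proof.
move=> u_gt0 u_le_abs C'_gt0 d_le_uC'.
set s := normZ R k; set D := `|dotRZ w k| => s_ge1 C_le_us small_divisor.
case: (boolP [exists j, s / C' < `|w i * (k j)%:~R - w j * (k i)%:~R|]).
  by move=> /existsP.
move=> /existsPn no_large; exfalso.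
(* Both terms of [bound] are below u s^2 / 2 <= |w_i| s^2 / 2. *)
have bound : `|w i| * s ^+ 2 <= d%:R * s * (s / C') + `|(k i)%:~R| * D.
  by apply: cross_terms_bound => l; rewrite leNgt; apply: no_large.
have u_ge0 := ltW u_gt0.
have D_ge0 : 0 <= D := normr_ge0 _.
have ratio_le : 2 * d%:R / C' <= u by rewrite ler_pdivrMr.
have first_le : d%:R * s * (s / C') * 2 <= u * s ^+ 2.
  have -> : d%:R * s * (s / C') * 2 = 2 * d%:R / C' * s ^+ 2 by rewrite /s; ring.
  by rewrite ler_wpM2r ?sqr_ge0.
have second_lt : `|(k i)%:~R| * D < C.
  by rewrite (le_lt_trans _ small_divisor) // mulrC ler_wpM2l // coord_le_normZ.
have us_le : u * s <= u * s ^+ 2 by rewrite ler_wpM2l // ler_eXnr.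
have u_le_wi : u * s ^+ 2 <= `|w i| * s ^+ 2 by rewrite ler_wpM2r ?sqr_ge0.
lra.
Qed.

Lemma exists_orthogonal_comparable k :
  0 < u -> (forall l, u <= `|w l|) -> 2 <= C' -> d%:R < C' ^+ 2 -> \sum_l `|w l| < C' ->
  2 * d%:R <= u * C' ->
  1 <= normZ R k -> 2 * C <= u * normZ R k -> `|dotRZ w k| * normZ R k < C ->
  exists k' : 'I_d -> int,
    [/\ dotZ k k' = 0,
        normZ R k / C' < normZ R k' < C' * normZ R k
      & normZ R k / C' < `|dotRZ w k'| < C' * normZ R k].
Proof.
move=> u_gt0 u_le_abs C'_ge2 d_lt_sqrC' sum_lt_C' d_le_uC' s_ge1 C_le_us small_divisor.
set s := normZ R k in s_ge1 C_le_us small_divisor *.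
have C'_gt0 : 0 < C' by lra.
have s_gt0 : 0 < s by lra.
have [i kmax] := exists_max_coord k (dim_gt0_of_normZ_gt0 s_gt0).
have [j large] :=
  exists_large_cross_term i u_gt0 u_le_abs C'_gt0 d_le_uC' s_ge1 C_le_us small_divisor.
have ij : i != j.
  apply: contraTneq large => <-; rewrite subrr normr0 -leNgt.
  by rewrite divr_ge0 // ltW.
have ts_lower := sqr_normZ_le_plane_perp R ij kmax.
have ts_upper := sqr_normZ_plane_perp_le R k ij.
set t := normZ R (plane_perp i j k) in ts_lower ts_upper *.
have t_gt0 : 0 < t.
  rewrite lt_def normZ_ge0 andbT; apply: contraTneq ts_lower => ->.
  by rewrite expr0n mulr0 -ltNge exprn_gt0.
exists (plane_perp i j k); split; first exact: dotZ_plane_perp.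
- apply/andP; split.
  + rewrite ltr_pdivrMr // -(ltr_pXn2r (_ : 0 < 2)%N) ?nnegrE ?mulr_ge0 ?ltW //.
    by rewrite exprMn (le_lt_trans ts_lower) // mulrC ltr_pM2l ?exprn_gt0.
  + rewrite -(ltr_pXn2r (_ : 0 < 2)%N) ?nnegrE ?mulr_ge0 ?ltW //.
    by rewrite exprMn (le_lt_trans ts_upper) // ltr_pM2r ?exprn_gt0 //; nra.
- rewrite dotRZ_plane_perp // large /=.
  by rewrite (le_lt_trans (cross_term_le _ _ _ _)) // ltr_pM2r.
Qed.

End Construction.

Theorem lemma3p1 (R : realType) (d : nat) (hd : (2 <= d)%N)
  (w : 'I_d -> R) (hw : nonresonant w)
  (k : nat -> 'I_d -> int)
  (hinf : forall M : R, exists N : nat, forall n : nat, (N <= n)%N -> M < normZ R (k n))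
  (C : R)
  (hsmall : forall n : nat,
      `|dotRZ w (k n)| < C / (normZ R (k n)) ^+ (d.-1)) :
  exists C' : R, 1 < C' /\
  exists N : nat, forall n : nat, (N <= n)%N ->
    exists k' : 'I_d -> int,
      [/\ dotZ (k n) k' = 0,
          normZ R (k n) / C' < normZ R k' < C' * normZ R (k n)
        & normZ R (k n) / C' < `|dotRZ w k'| < C' * normZ R (k n)].
Proof.
have [u u_gt0 u_le_abs] :=
  exists_abs_lower_bound (ltnW hd) (nonresonant_coord_neq0 hw).
pose W := \sum_l `|w l|.
have W_ge0 : 0 <= W by rewrite sumr_ge0.
have d_ge0 : 0 <= d%:R :> R := ler0n R d.
pose C' := d%:R + 2 + W + 2 * d%:R / u.
have C'_ge : d%:R + 2 + W <= C'.
  by rewrite /C' lerDl divr_ge0 ?mulr_ge0 // ltW.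
exists C'; split; first by lra.
have [N HN] := hinf (1 + 2 * `|C| / u).
exists N => n /HN s_large.
have us_large : u + 2 * `|C| < u * normZ R (k n).
  by move: s_large; rewrite -(ltr_pM2l u_gt0) mulrDr mulr1 [u * (_ / u)]mulrC divfK ?gt_eqF.
have s_ge1 : 1 <= normZ R (k n) by have := normr_ge0 C; nra.
apply: (exists_orthogonal_comparable (C := C) u_gt0 u_le_abs _ _ _ _ s_ge1).
- by lra.
- by nra.
- by rewrite -/W; lra.
- by rewrite /C' !mulrDr [u * (_ / u)]mulrC divfK ?gt_eqF // lerDr; nra.
- by have := ler_norm C; lra.
- by apply: mul_lt_of_lt_divXn (hsmall n) => //; rewrite -subn1 subn_gt0.
Qed.
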